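(* Let $P$ be a finite poset and $R$ a commutative unital ring. Then $J^3_1(P,R)=[I^3(P,R),I^3(P,R)]$.
   Context: For a finite poset $P$, $P^3_\le=\{(x,y,z)\in P^3: x\le y\le z\}$, and $I^3(P,R)$ is the $R$-module of functions $f:P^3_\le\to R$ with multiplication $(fg)(x_1,x_2,x_3)=\sum f(x_1,y_1,y_2)g(y_1,y_2,x_3)$ over all $x_1\le y_1\le x_2\le y_2\le x_3$. For $a\le b$, $l(a,b)$ is the maximum of $|C|-1$ over chains $C$ in the interval $[a,b]$. $J^3_1(P,R)=\{f: f(x_1,x_2,x_3)=0 \text{ whenever } l(x_1,x_3)<1\}$, i.e. $f$ vanishes on all $(x,x,x)$. $[f,g]=fg-gf$, and for subsets $U,V$, $[U,V]$ is the $R$-submodule spanned by all $[u,v]$, $u\in U$, $v\in V$. *)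

From HB Require Import structures.
From mathcomp Require Import all_boot all_order all_algebra.
Set Implicit Arguments. Unset Strict Implicit. Unset Printing Implicit Defensive.
Import Order.TTheory GRing.Theory.
Local Open Scope ring_scope.

Section IncidenceAlgebra3.
Variables (disp : Order.disp_t) (P : finPOrderType disp) (R : comPzRingType).

(* Elements of I^3(P,R) are represented as functions P -> P -> P -> R
   that vanish outside P^3_<= = {(x,y,z) | x <= y <= z}. *)
Definition fun3 := P -> P -> P -> R.

Definition in_I3 (f : fun3) : Prop :=
  forall x y z : P, ~~ ((x <= y)%O && (y <= z)%O) -> f x y z = 0.

Definition mul3 (f g : fun3) : fun3 := fun x1 x2 x3 =>
  if (x1 <= x2)%O && (x2 <= x3)%O then
    \sum_(y1 : P) \sum_(y2 : P |
        [&& (x1 <= y1)%O, (y1 <= x2)%O, (x2 <= y2)%O & (y2 <= x3)%O])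
      f x1 y1 y2 * g y1 y2 x3
  else 0.

Definition comm3 (f g : fun3) : fun3 := fun x y z =>
  mul3 f g x y z - mul3 g f x y z.

Definition is_chain_in (a b : P) (C : {set P}) : bool :=
  [forall x in C, forall y in C,
     [&& (a <= x)%O, (x <= b)%O & (x >=< y)%O]].

Definition lchain (a b : P) : nat :=
  \max_(C : {set P} | is_chain_in a b C) (#|C|.-1)%N.

Definition in_J31 (f : fun3) : Prop :=
  forall x1 x2 x3 : P, (x1 <= x2)%O -> (x2 <= x3)%O ->
    (lchain x1 x3 < 1)%N -> f x1 x2 x3 = 0.

Definition in_comm_span (h : fun3) : Prop :=
  exists (n : nat) (r : 'I_n -> R) (u v : 'I_n -> fun3),
    (forall i, in_I3 (u i) /\ in_I3 (v i)) /\
    (forall x y z : P, h x y z = \sum_(i < n) r i * comm3 (u i) (v i) x y z).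

End IncidenceAlgebra3.

From HB Require Import structures.
From mathcomp Require Import all_boot all_order all_algebra.
Set Implicit Arguments. Unset Strict Implicit. Unset Printing Implicit Defensive.
Import Order.TTheory GRing.Theory.
Local Open Scope ring_scope.

(* In a chain x1 <= x2 <= x3 we have l(x1, x3) = 0 iff x1 = x3, so J^3_1 consists
   of the elements of I^3 vanishing on the diagonal {(x,x,x)}.  The diagonal entry
   of a product is the product of the diagonal entries, so every commutator, and
   hence [I^3, I^3], vanishes there.  Conversely, for the matrix units e_abc one
   has e_abb e_bbc = e_abc while e_bbc e_abb = 0 unless a = b = c, so every
   off-diagonal matrix unit is a commutator. *)

Section IncidenceAlgebra3.
Variables (disp : Order.disp_t) (P : finPOrderType disp) (R : comPzRingType).

Lemma lchain_id (a : P) : lchain a a = 0%N.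
Proof.
apply/eqP; rewrite -leqn0; apply/bigmax_leqP => C /forallP chainC.
have sub_a : C \subset [set a].
  apply/subsetP => x xC; move/implyP: (chainC x) => /(_ xC) /forallP /(_ x).
  by rewrite xC inE => /and3P[ax xa _]; apply/eqP/le_anti; rewrite xa ax.
by rewrite leqn0 -subn1 subn_eq0 -(cards1 a) subset_leq_card.
Qed.

Lemma lchain_gt0 (a b : P) : (a < b)%O -> (0 < lchain a b)%N.
Proof.
move=> lt_ab; have le_ab := ltW lt_ab.
have chain_ab : is_chain_in a b [set a; b].
  apply/forallP => x; apply/implyP => /set2P x_ab.
  apply/forallP => y; apply/implyP => /set2P y_ab.
  by case: x_ab => ->; case: y_ab => ->;
    rewrite /Order.comparable ?lexx ?le_ab ?orbT.
by apply: leq_trans (leq_bigmax_cond _ chain_ab); rewrite cards2 (lt_eqF lt_ab).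
Qed.

Lemma J31_diag0P (f : fun3 P R) : in_J31 f <-> (forall x, f x x x = 0).
Proof.
split=> [J31f x | diag0 x1 x2 x3 le12 le23 l13].
  by apply: J31f; rewrite ?lexx ?lchain_id.
have := le_trans le12 le23; rewrite le_eqVlt => /predU1P[eq13 | lt13]; last first.
  by move: l13; rewrite ltnNge lchain_gt0.
have -> : x2 = x1 by apply/le_anti; rewrite le12 eq13 le23.
by rewrite -eq13 diag0.
Qed.

Lemma mul3_diag (u v : fun3 P R) x : mul3 u v x x x = u x x x * v x x x.
Proof.
have le_antiE y : (x <= y)%O -> (y <= x)%O -> y = x.
  by move=> xy yx; apply/le_anti; rewrite xy yx.
rewrite /mul3 lexx (big_only1 x) // => [|y1 ne1].
  by rewrite (big_only1 x) ?lexx // => y2 ne2 /and4P[_ _ x_y2 y2_x];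
    rewrite (le_antiE y2) ?eqxx in ne2.
by rewrite big1 // => y2 /and4P[x_y1 y1_x _ _]; rewrite (le_antiE y1) ?eqxx in ne1.
Qed.

Lemma comm3_diag (u v : fun3 P R) x : comm3 u v x x x = 0.
Proof. by rewrite /comm3 !mul3_diag mulrC subrr. Qed.

Lemma comm_span_diag0 (h : fun3 P R) x : in_comm_span h -> h x x x = 0.
Proof.
by move=> [n [r [u [v [_ ->]]]]]; rewrite big1 // => i _; rewrite comm3_diag mulr0.
Qed.

Lemma comm_span_sum (T : finType) (r : T -> R) (u v : T -> fun3 P R) (h : fun3 P R) :
  (forall t, in_I3 (u t) /\ in_I3 (v t)) ->
  (forall x y z, h x y z = \sum_(t : T) r t * comm3 (u t) (v t) x y z) ->
  in_comm_span h.
Proof.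
move=> I3uv h_sum; exists #|T|, (r \o enum_val), (u \o enum_val), (v \o enum_val).
split=> [i | x y z]; first exact: I3uv.
by rewrite h_sum -(big_enum_val (fun t => r t * comm3 (u t) (v t) x y z)).
Qed.

Definition unit3 (a b c : P) : fun3 P R := fun x y z =>
  if [&& x == a, y == b, z == c, (a <= b)%O & (b <= c)%O] then 1 else 0.

Lemma unit3_I3 a b c : in_I3 (unit3 a b c).
Proof.
move=> x y z; rewrite /unit3; case: ifP => // /and5P[/eqP-> /eqP-> /eqP-> ab bc].
by rewrite ab bc.
Qed.

Lemma I3_unit3_expansion (f : fun3 P R) x y z : in_I3 f ->
  f x y z = \sum_(t : P * P * P) f t.1.1 t.1.2 t.2 * unit3 t.1.1 t.1.2 t.2 x y z.
Proof.
move=> I3f; rewrite (bigD1 (x, y, z)) //= big1 => [|[[a b] c] /= ne_t].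
  rewrite addr0 /unit3 !eqxx /=.
  by case: ifP => [_ | /negbT /I3f ->]; rewrite ?mulr1 ?mul0r.
rewrite /unit3; case: ifP; rewrite ?mulr0 // => /and5P[/eqP xa /eqP yb /eqP zc _ _].
by rewrite xa yb zc eqxx in ne_t.
Qed.

Lemma mul3_unit3l a b c (g : fun3 P R) x y z :
  mul3 (unit3 a b c) g x y z =
  if [&& x == a, (a <= b)%O, (b <= y)%O, (y <= c)%O & (c <= z)%O] then g b c z
  else 0.
Proof.
rewrite /mul3 (big_only1 b) // => [|y1 ne1]; last first.
  by rewrite big1 // => y2 _; rewrite /unit3 (negbTE ne1) andbF mul0r.
rewrite big_mkcond (big_only1 c) // => [|y2 ne2]; last first.
  by rewrite /unit3 (negbTE ne2) !andbF mul0r if_same.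
rewrite /unit3 !eqxx /=; have [-> | _] := eqVneq x a; last first.
  by rewrite mul0r !if_same.
case H : [&& (a <= b)%O, (b <= y)%O, (y <= c)%O & (c <= z)%O];
  last by rewrite !if_same.
move/and4P: H => [ab b_y yc cz].
by rewrite (le_trans ab b_y) (le_trans yc cz) ab (le_trans b_y yc) mul1r.
Qed.

Lemma mul3_unit3_chain a b c x y z :
  mul3 (unit3 a b b) (unit3 b b c) x y z = unit3 a b c x y z.
Proof.
rewrite mul3_unit3l /unit3 !eqxx lexx /=.
have [-> | ne_yb] := eqVneq y b; last first.
  rewrite andFb andbF; case: ifP => // /and5P[_ _ b_y y_b _].
  by case/eqP: ne_yb; apply/le_anti; rewrite y_b b_y.
rewrite lexx /=; case: (x == a) => //=; case: (a <= b)%O; rewrite /= ?andbF //.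
by have [-> | _] := eqVneq z c; [case: (b <= c)%O | rewrite if_same].
Qed.

Lemma mul3_unit3_rev a b c x y z : ~~ ((a == b) && (b == c)) ->
  mul3 (unit3 b b c) (unit3 a b b) x y z = 0.
Proof.
move=> not_diag; rewrite mul3_unit3l /unit3.
case: ifP => // _; case: ifP => // /and5P[/eqP ba /eqP cb _ _ _].
by move: not_diag; rewrite cb ba !eqxx.
Qed.

Lemma unit3_comm3 a b c x y z : ~~ ((a == b) && (b == c)) ->
  comm3 (unit3 a b b) (unit3 b b c) x y z = unit3 a b c x y z.
Proof.
by move=> not_diag; rewrite /comm3 mul3_unit3_chain mul3_unit3_rev // subr0.
Qed.

Lemma comm_span_of_diag0 (f : fun3 P R) :
  in_I3 f -> (forall x, f x x x = 0) -> in_comm_span f.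
Proof.
move=> I3f diag0; pose F (t : P * P * P) := f t.1.1 t.1.2 t.2.
apply: (comm_span_sum (r := F) (u := fun t => unit3 t.1.1 t.1.2 t.1.2)
                                 (v := fun t => unit3 t.1.2 t.1.2 t.2)).
  by move=> t; split; apply: unit3_I3.
move=> x y z; rewrite (I3_unit3_expansion x y z I3f).
apply: eq_bigr => -[[a b] c] _ /=; rewrite /F /=.
have [/andP[/eqP ab /eqP bc] | not_diag] := boolP ((a == b) && (b == c)).
  by rewrite -bc -ab diag0 !mul0r.
by rewrite unit3_comm3.
Qed.

End IncidenceAlgebra3.

Theorem proposition2p4 (disp : Order.disp_t) (P : finPOrderType disp)
  (R : comPzRingType) (f : fun3 P R) :
  in_I3 f -> (in_J31 f <-> in_comm_span f).
Proof.
move=> I3f; split=> [/J31_diag0P | span_f]; first exact: comm_span_of_diag0.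
by apply/J31_diag0P => x; apply: comm_span_diag0.
Qed.
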